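(* Let $p\ge 1$ and $q\ge 2$ be integers with $q-1\le p\le \frac12 q(q-1)$. Then there is a Zariski open, dense subset $\mathcal{O}$ of $\mathcal{V}(p,q)=\Lambda^2(\mathbb{R}^q)^*\otimes\mathbb{R}^p$ such that for every $\rho\in\mathcal{O}\cap V^o_{p,q}$, the simply connected 2-step nilpotent Lie group $N_\rho$ satisfies the partial automatic continuity. Moreover, for every $\rho\in\mathcal{O}\cap V^o_{p,q}$ and every abstract (not necessarily continuous) group automorphism $F$ of $N_\rho$, there exist a central automorphism $\mu$ of $N_\rho$ and a Lie group automorphism $\overline{F}$ of $N_\rho$ such that $F=\mu\circ\overline{F}$.
   Context: Every $\rho\in\mathcal{V}(p,q)=\Lambda^2(\mathbb{R}^q)^*\otimes\mathbb{R}^p$ (a linear map $\Lambda^2\mathbb{R}^q\to\mathbb{R}^p$) defines a Lie bracket $[\cdot,\cdot]_\rho$ on $\mathbb{R}^q\oplus\mathbb{R}^p$ by $[x,y]_\rho=\rho(x\wedge y)$ for $x,y\in\mathbb{R}^q$ and all brackets involving $\mathbb{R}^p$ equal to $0$; write $\mathcal{N}_\rho=(\mathbb{R}^q\oplus\mathbb{R}^p,[\cdot,\cdot]_\rho)$. Let $V^o_{p,q}\subseteq\mathcal{V}(p,q)$ be the (Zariski open, dense) set of surjective $\rho$, i.e. those for which $\mathcal{N}_\rho$ is 2-step nilpotent with $[\mathcal{N}_\rho,\mathcal{N}_\rho]=\mathbb{R}^p$ of dimension $p$ (''type $(p,q)$''). $N_\rho$ denotes the simply connected Lie group with Lie algebra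 $\mathcal{N}_\rho$. For a simply connected nilpotent Lie group $N$ with Lie algebra $\mathcal{N}$ (so $\exp:\mathcal{N}\to N$ is a diffeomorphism): a central automorphism of $N$ is an abstract group automorphism $F$ with $x^{-1}F(x)$ in the center of $N$ for all $x$; a Lie group automorphism is a continuous (hence smooth) automorphism. Field automorphisms: if $\mathcal{N}=\mathcal{N}_1\oplus\cdots\oplus\mathcal{N}_k$ is a direct sum of ideals, for each $\mathcal{N}_i$ that is the realification of a complex Lie algebra choose a $\mathbb{C}$-basis $e_1,\dots,e_m$ of $\mathcal{N}_i$ and a field automorphism $\varphi$ of $\mathbb{C}$ fixing the structure constants in this basis and set $\sigma_i(\sum x_le_l)=\sum\varphi(x_l)e_l$; otherwise $\sigma_i=\mathrm{id}$. Then $\sigma=\sigma_1\times\cdots\times\sigma_k$ is a field automorphism of $\mathcal{N}$ and $\exp\circ\sigma\circ\exp^{-1}$ is a field automorphism of $N$ (if $\mathcal{N}$ is not such a realification in any way, only the identity arises). $N$ satisfies the partial automatic continuity if every abstract group automorphism $F$ of $N$ can be written $F=\mu\circ\overline{F}\circ\Phi$ with $\mu$ a central automorphism, $\overline{F}$ a Lie group automorphism and $\Phi$ a field automorphism of $N$. *)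

From HB Require Import structures.
From mathcomp Require Import all_boot all_order all_algebra.
From mathcomp Require Import all_classical all_reals all_analysis.
From mathcomp Require Import Rstruct Rstruct_topology complex.
From Stdlib Require Import Reals.
Set Implicit Arguments. Unset Strict Implicit. Unset Printing Implicit Defensive.
Import Order.TTheory GRing.Theory Num.Theory.
Local Open Scope ring_scope.

Notation RR := Rdefinitions.R.
Notation CC := (Rdefinitions.R)[i].

(* rho in V(p,q) = Lambda^2 (R^q)^* (x) R^p is given by its values
   c i j = rho(e_i /\ e_j) in R^p; these are exactly the NR_alternating
   families c (c j i = - c i j). *)
Definition Vcoef (p q : nat) := 'I_q -> 'I_q -> 'rV[RR]_p.

Definition NR_alternating p q (c : Vcoef p q) : Prop :=
  forall i j, c j i = - c i j.

Definition rho_wedge p q (c : Vcoef p q) (x y : 'rV[RR]_q) : 'rV[RR]_p :=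
  \sum_(i < q) \sum_(j < q) (x 0 i * y 0 j) *: c i j.

(* rho : Lambda^2 R^q -> R^p is surjective (rho in V^o_{p,q}) *)
Definition NR_surjective_rho p q (c : Vcoef p q) : Prop :=
  forall z : 'rV[RR]_p, exists a : 'I_q -> 'I_q -> RR,
    z = \sum_(i < q) \sum_(j < q) a i j *: c i j.

(* polynomial functions in the coordinates c i j 0 k of V(p,q)
   (restrictions to the linear subspace V(p,q) of polynomial functions on the
   ambient coordinate space, i.e. exactly the polynomial functions on V(p,q)) *)
Inductive polyfun (p q : nat) : (Vcoef p q -> RR) -> Prop :=
| pf_const (a : RR) : polyfun (fun _ => a)
| pf_coord (i j : 'I_q) (k : 'I_p) : polyfun (fun c => c i j 0 k)
| pf_add f g : polyfun f -> polyfun g -> polyfun (fun c => f c + g c)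
| pf_mul f g : polyfun f -> polyfun g -> polyfun (fun c => f c * g c).

(* a subset of V(p,q) (only its trace on NR_alternating c matters) *)
Definition NR_zariski_closed p q (Z : Vcoef p q -> Prop) : Prop :=
  exists S : (Vcoef p q -> RR) -> Prop,
    (forall f, S f -> polyfun f) /\
    forall c, NR_alternating c -> (Z c <-> forall f, S f -> f c = 0).

Definition NR_zariski_open p q (O : Vcoef p q -> Prop) : Prop :=
  NR_zariski_closed (fun c => ~ O c).

Definition NR_zariski_dense p q (O : Vcoef p q -> Prop) : Prop :=
  forall Z : Vcoef p q -> Prop, NR_zariski_closed Z ->
    (forall c, NR_alternating c -> O c -> Z c) ->
    forall c, NR_alternating c -> Z c.

Notation Nsp p q := ('rV[RR]_q * 'rV[RR]_p)%type.

Definition lie p q (c : Vcoef p q) (X Y : Nsp p q) : Nsp p q :=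
  (0, rho_wedge c X.1 Y.1).

(* The simply connected group N_rho, identified with its Lie algebra via exp
   (Baker-Campbell-Hausdorff for 2-step nilpotent algebras):
   exp X * exp Y = exp (X + Y + 1/2 [X,Y]). *)
Definition gmul p q (c : Vcoef p q) (X Y : Nsp p q) : Nsp p q :=
  (X.1 + Y.1, X.2 + Y.2 + 2^-1 *: rho_wedge c X.1 Y.1).
Definition ginv p q (X : Nsp p q) : Nsp p q := (- X.1, - X.2).

Definition NR_group_aut p q (c : Vcoef p q) (F : Nsp p q -> Nsp p q) : Prop :=
  bijective F /\ forall X Y, F (gmul c X Y) = gmul c (F X) (F Y).

Definition in_center p q (c : Vcoef p q) (g : Nsp p q) : Prop :=
  forall h, gmul c g h = gmul c h g.

Definition NR_central_aut p q (c : Vcoef p q) (F : Nsp p q -> Nsp p q) : Prop :=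
  NR_group_aut c F /\ forall X, in_center c (gmul c (ginv X) (F X)).

Definition NR_lie_group_aut p q (c : Vcoef p q) (F : Nsp p q -> Nsp p q) : Prop :=
  NR_group_aut c F /\ continuous F.

Definition is_ideal p q (c : Vcoef p q) (U : Nsp p q -> Prop) : Prop :=
  [/\ U 0, (forall u v, U u -> U v -> U (u + v)),
      (forall (a : RR) u, U u -> U (a *: u)) &
      (forall u Y, U u -> U (lie c u Y))].

(* complex structure J on the ideal U making (U, [,]) the realification of a
   complex Lie algebra *)
Definition complex_structure p q (c : Vcoef p q) (U : Nsp p q -> Prop)
  (J : Nsp p q -> Nsp p q) : Prop :=
  [/\ (forall u, U u -> U (J u)),
      (forall u, U u -> J (J u) = - u),
      (forall (a : RR) u v, U u -> U v -> J (a *: u + v) = a *: J u + J v) &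
      (forall u v, U u -> U v -> lie c (J u) v = J (lie c u v))].

Definition cscale p q (J : Nsp p q -> Nsp p q) (a : CC) (u : Nsp p q) :=
  (complex.Re a : RR) *: u + (complex.Im a : RR) *: J u.

Definition ccomb p q (J : Nsp p q -> Nsp p q) m (a : 'I_m -> CC)
  (e : 'I_m -> Nsp p q) : Nsp p q := \sum_(l < m) cscale J (a l) (e l).

Definition is_C_basis p q (U : Nsp p q -> Prop) (J : Nsp p q -> Nsp p q) m
  (e : 'I_m -> Nsp p q) : Prop :=
  (forall l, U (e l)) /\
  forall u, U u -> exists! a : 'I_m -> CC, u = ccomb J a e.

Definition field_aut_C (phi : CC -> CC) : Prop :=
  [/\ bijective phi, (forall x y, phi (x + y) = phi x + phi y),
      (forall x y, phi (x * y) = phi x * phi y) & phi 1 = 1].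

(* sigma_i on an ideal U : either the identity, or (if U is the realification
   of a complex Lie algebra) conjugation of coordinates by a field
   automorphism phi of C fixing the structure constants in a C-basis *)
Definition field_aut_component p q (c : Vcoef p q) (U : Nsp p q -> Prop)
  (s : Nsp p q -> Nsp p q) : Prop :=
  (forall u, U u -> s u = u) \/
  exists (J : Nsp p q -> Nsp p q) (m : nat) (e : 'I_m -> Nsp p q)
         (cst : 'I_m -> 'I_m -> 'I_m -> CC) (phi : CC -> CC),
    [/\ complex_structure c U J, is_C_basis U J e,
        (forall a b, lie c (e a) (e b) = ccomb J (cst a b) e),
        field_aut_C phi &
        (forall a b l, phi (cst a b l) = cst a b l)] /\
        (forall a : 'I_m -> CC, s (ccomb J a e) = ccomb J (fun l => phi (a l)) e).


(* field automorphism sigma of the Lie algebra N_rho; since exp is the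
   identity in our model of N_rho, exp o sigma o exp^-1 = sigma is then the
   corresponding field automorphism of the group N_rho *)
Definition NR_field_aut p q (c : Vcoef p q) (sigma : Nsp p q -> Nsp p q) : Prop :=
  exists (k : nat) (U : 'I_k -> Nsp p q -> Prop) (s : 'I_k -> Nsp p q -> Nsp p q),
    [/\ (forall i, is_ideal c (U i)),
        (forall X, exists! Xs : 'I_k -> Nsp p q,
            (forall i, U i (Xs i)) /\ X = \sum_(i < k) Xs i),
        (forall i, field_aut_component c (U i) (s i)) &
        (forall Xs : 'I_k -> Nsp p q, (forall i, U i (Xs i)) ->
            sigma (\sum_(i < k) Xs i) = \sum_(i < k) s i (Xs i))].

Definition NR_partial_automatic_continuity p q (c : Vcoef p q) : Prop :=
  forall F, NR_group_aut c F ->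
    exists mu Fb Phi, [/\ NR_central_aut c mu, NR_lie_group_aut c Fb, NR_field_aut c Phi &
                          F = mu \o Fb \o Phi].

(* An automorphism F of N_rho preserves the centre 0 x R^p, so it has the form
   F (x, z) = (A x, h x + B z) with A, B additive bijections and
   B (rho (x, y)) = rho (A x, A y); hence y |-> A (s A^-1 y) is selfadjoint for
   rho, for every real s.  Take for O the set of rho all of whose selfadjoint
   endomorphisms are scalar.  This is the injectivity of a linear system with
   coefficients polynomial in rho, i.e. the nonvanishing of one of its maximal
   minors, so O is Zariski open, and an explicit rho in O shows that it is dense.
   For rho in O we get A (s A^-1 y) = phi(s) y with phi a ring endomorphism of R,
   so phi = id and A is linear; B is linear as rho is surjective, and F is the
   Lie automorphism (A, B) followed by the central shear (x, z) |-> (x, z + h (A^-1 x)).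
   No field automorphism is needed. *)

From HB Require Import structures.
From mathcomp Require Import all_boot all_order all_algebra.
From mathcomp Require Import all_classical all_reals all_analysis.
From mathcomp Require Import Rstruct Rstruct_topology complex.
From Stdlib Require Import Reals.
From mathcomp Require Import ring lra.
Import Order.TTheory GRing.Theory Num.Theory.
Set Implicit Arguments. Unset Strict Implicit. Unset Printing Implicit Defensive.
Local Open Scope ring_scope.

(* Squares are mapped to squares, so [f] is monotone; a monotone map fixing the
   integers is pinned down by [floor]. *)
Lemma real_rmorph_id (R : realType) (f : R -> R) :
  {morph f : x y / x + y} -> {morph f : x y / x * y} -> f 1 = 1 -> forall x, f x = x.
Proof.
move=> fD fM f1.
have fB : zmod_morphism f by move=> x y; rewrite -[in RHS](subrK y x) [in RHS]fD addrK.
pose g : {rmorphism R -> R} := HB.pack f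
  (GRing.isZmodMorphism.Build _ _ f fB) (GRing.isMonoidMorphism.Build _ _ f (f1, fM)).
have f_int z : f z%:~R = z%:~R := rmorph_int g z.
have f_nat n : f n%:R = n%:R := rmorph_nat g n.
have f_sqr x : f (x ^+ 2) = f x ^+ 2 := rmorphXn g 2 x.
have f_mono x y : x <= y -> f x <= f y.
  rewrite -subr_ge0 => /sqr_sqrtr yx.
  by rewrite -subr_ge0 -fB -yx f_sqr sqr_ge0.
move=> x; have bnd n : `|n%:R * (f x - x)| <= 1.
  have lo := floor_le (n%:R * x); have hi := floorD1_gt (n%:R * x).
  have := f_mono _ _ lo; have := f_mono _ _ (ltW hi).
  rewrite !f_int fM f_nat intrD mulr1z in hi *.
  by move=> *; rewrite ler_norml; apply/andP; split; lra.
apply/eqP; rewrite -subr_eq0; apply: contraT => d_neq0.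
have d_gt0 : 0 < `|f x - x| by rewrite normr_gt0.
have := bnd (Num.bound `|f x - x|^-1); rewrite normrM ger0_norm // -ler_pdivlMr //.
by rewrite div1r leNgt archi_boundP // invr_ge0 ltW.
Qed.

Lemma mx_of_linear (R : comNzRingType) m n (f : 'rV[R]_m -> 'rV[R]_n) :
  (forall a x y, f (a *: x + y) = a *: f x + f y) ->
  exists M, forall x, f x = x *m M.
Proof.
move=> f_lin; pose g : {linear 'rV[R]_m -> 'rV[R]_n} :=
  HB.pack f (GRing.isLinear.Build _ _ _ *:%R f f_lin).
by exists (lin1_mx g) => x; rewrite mul_rV_lin1.
Qed.

Lemma mulmx_continuous m n (M : 'M[RR]_(m, n)) :
  continuous (fun x : 'rV[RR]_m => x *m M).
Proof.
have -> : (fun x : 'rV[RR]_m => x *m M) = (fun x => \sum_(i < m) x 0 i *: row i M).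
  by apply: funext => x; rewrite mulmx_sum_row.
move=> x; apply: cvg_big; [exact: add_continuous | exact: nbhs_filter | move=> i _].
by apply: cvgZr_tmp; [exact: nbhs_filter | exact: coord_continuous].
Qed.

Lemma pair_map_continuous (S T S' T' : topologicalType) (f : S -> S') (g : T -> T') :
  continuous f -> continuous g -> continuous (fun X : S * T => (f X.1, g X.2)).
Proof.
move=> f_cont g_cont X; apply: cvg_pair.
- by apply: (@continuous_comp _ _ _ fst f); [exact: cvg_fst | exact: f_cont].
- by apply: (@continuous_comp _ _ _ snd g); [exact: cvg_snd | exact: g_cont].
Qed.

Section Minors.
Variables (K : fieldType) (I J : finType) (E : I -> J -> K).

Definition rows_independent : Prop :=
  forall v : I -> K, (forall j, \sum_i v i * E i j = 0) -> forall i, v i = 0.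

Definition minor (g : 'I_#|I| -> J) : K := \det (\matrix_(a, b) E (enum_val a) (g b)).

Lemma rows_independentP : rows_independent <-> exists g, minor g != 0.
Proof.
split=> [E_indep | [g]]; last first.
  rewrite /minor -unitfE -unitmxE => M_unit v vE.
  pose w : 'rV[K]_#|I| := \row_a v (enum_val a).
  have wM0 : w *m \matrix_(a, b) E (enum_val a) (g b) = 0.
    apply/rowP => b; rewrite !mxE -[RHS](vE (g b)) (big_enum_val (A := I)) /=.
    by apply: eq_bigr => a _; rewrite !mxE.
  have w0 : w = 0 by rewrite -(mulmxK M_unit w) wM0 mul0mx.
  by move=> i; have /rowP/(_ (enum_rank i)) := w0; rewrite !mxE enum_rankK.
pose N : 'M[K]_(#|I|, #|J|) := \matrix_(a, b) E (enum_val a) (enum_val b).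
have N_free : row_free N.
  apply: inj_row_free => w w0; apply/rowP => a; rewrite mxE.
  rewrite -[a]enum_valK; apply: (E_indep (fun i => w 0 (enum_rank i))) => j.
  transitivity ((w *m N) 0 (enum_rank j)); last by rewrite w0 mxE.
  rewrite mxE (big_enum_val (A := I)) /=.
  by apply: eq_bigr => b _; rewrite !mxE enum_valK enum_rankK.
have NT_full : row_full N^T by rewrite /row_full mxrank_tr.
exists (fun a => enum_val (fullrankfun NT_full a)).
rewrite /minor -unitfE -unitmxE -unitmx_tr.
rewrite (_ : _^T = rowsub (fullrankfun NT_full) N^T) ?fullrowsub_unit //.
by apply/matrixP => a b; rewrite !mxE.
Qed.

End Minors.

Lemma horner_eq0_poly (R : numDomainType) (P : {poly R}) :
  (forall t, P.[t] = 0) -> P = 0.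
Proof.
move=> P0; apply: contraTeq isT => P_neq0.
pose rs : seq R := [seq i%:R | i <- iota 0 (size P)].
have rs_roots : all (root P) rs by apply/allP => _ /mapP[i _ ->]; rewrite /root P0.
have rs_uniq : uniq rs.
  by rewrite map_inj_uniq ?iota_uniq // => m n /eqP; rewrite eqr_nat => /eqP.
by have := max_poly_roots P_neq0 rs_roots rs_uniq; rewrite size_map size_iota ltnn.
Qed.

Lemma sum_mul_delta (R : pzSemiRingType) (I : finType) (F : I -> R) (a0 : I) :
  \sum_a F a * (a == a0)%:R = F a0.
Proof.
rewrite (bigD1 a0) //= eqxx mulr1 big1 ?addr0 // => a /negbTE a_neq.
by rewrite a_neq mulr0.
Qed.

Section RhoWedge.
Variables (p q : nat) (c : Vcoef p q).
Implicit Types (x y : 'rV[RR]_q).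

Lemma rho_wedgeDl x1 x2 y :
  rho_wedge c (x1 + x2) y = rho_wedge c x1 y + rho_wedge c x2 y.
Proof.
rewrite /rho_wedge -big_split; apply: eq_bigr => i _.
by rewrite -big_split; apply: eq_bigr => j _; rewrite mxE mulrDl scalerDl.
Qed.

Lemma rho_wedgeDr x y1 y2 :
  rho_wedge c x (y1 + y2) = rho_wedge c x y1 + rho_wedge c x y2.
Proof.
rewrite /rho_wedge -big_split; apply: eq_bigr => i _.
by rewrite -big_split; apply: eq_bigr => j _; rewrite mxE mulrDr scalerDl.
Qed.

Lemma rho_wedgeZl (a : RR) x y : rho_wedge c (a *: x) y = a *: rho_wedge c x y.
Proof.
rewrite /rho_wedge scaler_sumr; apply: eq_bigr => i _.
by rewrite scaler_sumr; apply: eq_bigr => j _; rewrite mxE scalerA mulrA.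
Qed.

Lemma rho_wedgeZr (a : RR) x y : rho_wedge c x (a *: y) = a *: rho_wedge c x y.
Proof.
rewrite /rho_wedge scaler_sumr; apply: eq_bigr => i _.
by rewrite scaler_sumr; apply: eq_bigr => j _; rewrite mxE scalerA mulrCA.
Qed.

Lemma rho_wedge0l y : rho_wedge c 0 y = 0.
Proof. by rewrite -(scale0r 0) rho_wedgeZl scale0r. Qed.

Lemma rho_wedge0r x : rho_wedge c x 0 = 0.
Proof. by rewrite -(scale0r 0) rho_wedgeZr scale0r. Qed.

Lemma rho_wedgeBl x1 x2 y :
  rho_wedge c (x1 - x2) y = rho_wedge c x1 y - rho_wedge c x2 y.
Proof. by rewrite rho_wedgeDl -scaleN1r rho_wedgeZl scaleN1r. Qed.

Lemma rho_wedgeBr x y1 y2 :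
  rho_wedge c x (y1 - y2) = rho_wedge c x y1 - rho_wedge c x y2.
Proof. by rewrite rho_wedgeDr -scaleN1r rho_wedgeZr scaleN1r. Qed.

Lemma rho_wedge_deltal i y :
  rho_wedge c (delta_mx 0 i) y = \sum_(b < q) y 0 b *: c i b.
Proof.
rewrite /rho_wedge (bigD1 i) //= [X in _ + X]big1 ?addr0.
  by apply: eq_bigr => b _; rewrite mxE !eqxx mul1r.
by move=> a /negbTE na; apply: big1 => b _; rewrite mxE na mul0r scale0r.
Qed.

Lemma rho_wedge_deltar x j :
  rho_wedge c x (delta_mx 0 j) = \sum_(a < q) x 0 a *: c a j.
Proof.
apply: eq_bigr => a _; rewrite (bigD1 j) //= big1 ?addr0.
  by rewrite mxE !eqxx mulr1.
by move=> b /negbTE nb; rewrite mxE nb andbF mulr0 scale0r.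
Qed.

Lemma rho_wedge_delta i j : rho_wedge c (delta_mx 0 i) (delta_mx 0 j) = c i j.
Proof.
rewrite rho_wedge_deltal (bigD1 j) //= big1 ?addr0; first by rewrite mxE !eqxx scale1r.
by move=> b /negbTE nb; rewrite mxE nb scale0r.
Qed.

Hypothesis c_alt : NR_alternating c.

Lemma rho_wedge_anti x y : rho_wedge c y x = - rho_wedge c x y.
Proof.
rewrite /rho_wedge exchange_big -sumrN; apply: eq_bigr => i _.
by rewrite -sumrN; apply: eq_bigr => j _; rewrite c_alt scalerN mulrC.
Qed.

End RhoWedge.

Section Selfadjoint.
Variables (p q : nat) (c : Vcoef p q).

Definition rho_selfadjoint (M : 'M[RR]_q) : Prop :=
  forall i j, rho_wedge c (row i M) (delta_mx 0 j) = rho_wedge c (delta_mx 0 i) (row j M).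

Definition selfadjoints_scalar : Prop :=
  forall M, rho_selfadjoint M -> exists a, M = a%:M.

Definition rho_nondegenerate : Prop :=
  forall u, (forall y, rho_wedge c u y = 0) -> u = 0.

Lemma scalar_selfadjoint a : rho_selfadjoint a%:M.
Proof. by move=> i j; rewrite !rowE !mul_mx_scalar rho_wedgeZl rho_wedgeZr. Qed.

Lemma selfadjointB M N :
  rho_selfadjoint M -> rho_selfadjoint N -> rho_selfadjoint (M - N).
Proof. by move=> hM hN i j; rewrite !linearB /= rho_wedgeBl rho_wedgeBr hM hN. Qed.

Lemma selfadjoint_map_scalar (T : 'rV[RR]_q -> 'rV[RR]_q) :
  selfadjoints_scalar -> rho_nondegenerate ->
  (forall x y, rho_wedge c (T x) y = rho_wedge c x (T y)) ->
  exists t : RR, forall x, T x = t *: x.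
Proof.
move=> sc nd Tsa.
have Tlin a x1 x2 : T (a *: x1 + x2) = a *: T x1 + T x2.
  apply/eqP; rewrite -subr_eq0; apply/eqP/nd => y.
  by rewrite rho_wedgeBl rho_wedgeDl rho_wedgeZl !Tsa rho_wedgeDl rho_wedgeZl subrr.
have [M TM] := mx_of_linear Tlin.
have [t Mt] : exists t, M = t%:M by apply: sc => i j; rewrite !rowE -!TM Tsa.
by exists t => x; rewrite TM Mt mul_mx_scalar.
Qed.

Lemma nondegenerate_selfadjoints_scalar :
  (1 < q)%nat -> NR_alternating c -> selfadjoints_scalar -> rho_nondegenerate.
Proof.
move=> q_gt1 c_alt sc u hu.
pose i0 : 'I_q := Ordinal (ltnW q_gt1); pose i1 : 'I_q := Ordinal q_gt1.
pose M := \matrix_(i, j) ((i == i0)%:R * u 0 j).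
have rowM i : row i M = (i == i0)%:R *: u by apply/rowP => j; rewrite !mxE.
have [a Ma] : exists a, M = a%:M.
  apply: sc => i j; rewrite !rowM rho_wedgeZl rho_wedgeZr hu.
  by rewrite (rho_wedge_anti c_alt) hu oppr0 !scaler0.
have a0 : a = 0 by move: (congr1 (fun N : 'M[RR]_q => N i1 i1) Ma); rewrite !mxE eqxx mul0r.
by move: (rowM i0); rewrite eqxx scale1r Ma a0 rowE mul_mx_scalar scale0r => <-.
Qed.

End Selfadjoint.

Section PolynomialFunctions.
Variables (p q : nat).
Implicit Types (f g : Vcoef p q -> RR).

Lemma polyfun_ext f g : f =1 g -> polyfun f -> polyfun g.
Proof. by move=> /funext ->. Qed.

Lemma polyfun_opp f : polyfun f -> polyfun (fun c => - f c).
Proof.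
move=> pf; apply: (polyfun_ext (f := fun c => -1 * f c)); first by move=> c; rewrite mulN1r.
exact: pf_mul (pf_const _ _ _) pf.
Qed.

Lemma polyfun_sum (T : Type) (r : seq T) (P : pred T) (F : T -> Vcoef p q -> RR) :
  (forall i, polyfun (F i)) -> polyfun (fun c => \sum_(i <- r | P i) F i c).
Proof.
move=> pF; elim: r => [|i r IH].
  by apply: (polyfun_ext (f := fun _ => 0)); [move=> c; rewrite big_nil | exact: pf_const].
apply: (polyfun_ext (f := fun c => (if P i then F i c else 0) + \sum_(j <- r | P j) F j c)).
  by move=> c; rewrite big_cons; case: (P i); rewrite ?add0r.
by apply: pf_add => //; case: (P i) => //; exact: pf_const.
Qed.

Lemma polyfun_prod (T : Type) (r : seq T) (P : pred T) (F : T -> Vcoef p q -> RR) :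
  (forall i, polyfun (F i)) -> polyfun (fun c => \prod_(i <- r | P i) F i c).
Proof.
move=> pF; elim: r => [|i r IH].
  by apply: (polyfun_ext (f := fun _ => 1)); [move=> c; rewrite big_nil | exact: pf_const].
apply: (polyfun_ext (f := fun c => (if P i then F i c else 1) * \prod_(j <- r | P j) F j c)).
  by move=> c; rewrite big_cons; case: (P i); rewrite ?mul1r.
by apply: pf_mul => //; case: (P i) => //; exact: pf_const.
Qed.

Lemma polyfun_det n (M : Vcoef p q -> 'M[RR]_n) :
  (forall i j, polyfun (fun c => M c i j)) -> polyfun (fun c => \det (M c)).
Proof.
move=> pM; apply: polyfun_sum => s; apply: pf_mul; first exact: pf_const.
exact: polyfun_prod.
Qed.

Lemma polyfun_rho_wedge x y k : polyfun (fun c : Vcoef p q => rho_wedge c x y 0 k).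
Proof.
apply: (polyfun_ext (f := fun c => \sum_i \sum_j x 0 i * y 0 j * c i j 0 k)).
  move=> c; rewrite summxE; apply: eq_bigr => i _.
  by rewrite summxE; apply: eq_bigr => j _; rewrite mxE.
apply: polyfun_sum => i; apply: polyfun_sum => j.
by apply: pf_mul; [exact: pf_const | exact: pf_coord].
Qed.

Definition coef_line (c c0 : Vcoef p q) (t : RR) : Vcoef p q :=
  fun i j => (1 - t) *: c i j + t *: c0 i j.

Lemma polyfun_coef_line f : polyfun f ->
  forall c c0, exists P : {poly RR}, forall t, P.[t] = f (coef_line c c0 t).
Proof.
move=> pf c c0; elim: pf => {f} [a | i j k | f g _ [P fP] _ [Q gQ] | f g _ [P fP] _ [Q gQ]].
- by exists a%:P => t; rewrite hornerC.
- exists ((c i j 0 k)%:P + 'X * (c0 i j 0 k - c i j 0 k)%:P) => t.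
  by rewrite /coef_line !hornerE !mxE; ring.
- by exists (P + Q) => t; rewrite hornerD fP gQ.
- by exists (P * Q) => t; rewrite hornerM fP gQ.
Qed.

Lemma zariski_dense_nonvanishing (d : Vcoef p q -> RR) (O : Vcoef p q -> Prop)
    (c0 : Vcoef p q) :
  polyfun d -> NR_alternating c0 -> d c0 != 0 ->
  (forall c, NR_alternating c -> d c != 0 -> O c) -> NR_zariski_dense O.
Proof.
move=> pd c0_alt dc0 dO Z [S [S_poly Z_zero]] OZ c c_alt; apply/(Z_zero c c_alt) => f Sf.
have line_alt t : NR_alternating (coef_line c c0 t).
  by move=> i j; rewrite /coef_line c_alt c0_alt !scalerN opprD.
have [Pf fP] := polyfun_coef_line (S_poly f Sf) c c0.
have [Pd dP] := polyfun_coef_line pd c c0.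
have PfPd0 : Pf * Pd = 0.
  apply: horner_eq0_poly => t; rewrite hornerM fP dP.
  have [-> | dt] := eqVneq (d (coef_line c c0 t)) 0; first by rewrite mulr0.
  by rewrite ((Z_zero _ (line_alt t)).1 (OZ _ (line_alt t) (dO _ (line_alt t) dt)) f Sf) mul0r.
have Pd_neq0 : Pd != 0.
  by apply: contraNneq dc0 => Pd0; rewrite (_ : c0 = coef_line c c0 1) -?dP ?Pd0 ?horner0 //;
    apply: funext => i; apply: funext => j; rewrite /coef_line subrr scale0r scale1r add0r.
move/eqP: PfPd0; rewrite mulf_eq0 (negbTE Pd_neq0) orbF => /eqP Pf0.
rewrite (_ : c = coef_line c c0 0) -?fP ?Pf0 ?horner0 //.
by apply: funext => i; apply: funext => j; rewrite /coef_line subr0 scale1r scale0r addr0.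
Qed.

End PolynomialFunctions.

Lemma zariski_open_nonvanishing p q (G : Type) (d : G -> Vcoef p q -> RR) :
  (forall g, polyfun (d g)) -> NR_zariski_open (fun c => exists g, d g c != 0).
Proof.
move=> pd; exists (fun f => exists g, f = d g); split; first by move=> f [g ->].
move=> c _; split=> [nO _ [g ->] | d0 [g]]; last by rewrite (d0 _ (ex_intro _ g erefl)) eqxx.
by apply/eqP/negPn/negP => dg; apply: nO; exists g.
Qed.

Section SelfadjointSystem.
Variables (p q : nat) (i0 : 'I_q) (c : Vcoef p q).

Definition selfadjoint_defect (M : 'M[RR]_q) i j : 'rV[RR]_p :=
  rho_wedge c (row i M) (delta_mx 0 j) - rho_wedge c (delta_mx 0 i) (row j M).

(* Unknowns: the entries of [M]; equations: selfadjointness and [M i0 i0 = 0]. *)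
Definition selfadjoint_eqn (e : option ('I_q * 'I_q * 'I_p)) (M : 'M[RR]_q) : RR :=
  if e is Some (i, j, k) then selfadjoint_defect M i j 0 k else M i0 i0.

Definition selfadjoint_system (ab : 'I_q * 'I_q) e : RR :=
  selfadjoint_eqn e (delta_mx ab.1 ab.2).

Lemma selfadjoint_eqn_is_scalar e : scalar (selfadjoint_eqn e).
Proof.
move=> a M N; case: e => [[[i j] k]|] /=; last by rewrite !mxE.
rewrite /selfadjoint_defect !linearP /= rho_wedgeDl rho_wedgeDr rho_wedgeZl rho_wedgeZr.
by rewrite !mxE; ring.
Qed.

Lemma selfadjoint_eqn_sum e (v : 'I_q * 'I_q -> RR) :
  \sum_ab v ab * selfadjoint_system ab e = selfadjoint_eqn e (\matrix_(a, b) v (a, b)).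
Proof.
pose L : {scalar 'M[RR]_q} := HB.pack (selfadjoint_eqn e)
  (GRing.isLinear.Build _ _ _ *%R _ (selfadjoint_eqn_is_scalar e)).
rewrite [\matrix_(a, b) _]matrix_sum_delta pair_bigA /=.
rewrite -[selfadjoint_eqn e _]/(L _) linear_sum; apply: eq_bigr => -[a b] _.
by rewrite linearZ mxE.
Qed.

Lemma rho_selfadjoint_eqn M :
  rho_selfadjoint c M <-> forall i j k, selfadjoint_eqn (Some (i, j, k)) M = 0.
Proof.
split=> [M_sa i j k | M_eqn i j]; first by rewrite /= /selfadjoint_defect M_sa subrr mxE.
by apply/eqP; rewrite -subr_eq0; apply/eqP/rowP => k; rewrite [RHS]mxE; exact: M_eqn.
Qed.

Lemma selfadjoint_system_indep :
  rows_independent selfadjoint_system <-> selfadjoints_scalar c.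
Proof.
split=> [indep M M_sa | sc v v_eqn].
  pose N := M - (M i0 i0)%:M.
  have N_sa : rho_selfadjoint c N by apply: selfadjointB => //; exact: scalar_selfadjoint.
  have N_eqn e : selfadjoint_eqn e N = 0.
    case: e => [[[i j] k]|]; first exact: (rho_selfadjoint_eqn N).1.
    by rewrite /= !mxE eqxx mulr1n subrr.
  suff N0 : N = 0 by exists (M i0 i0); apply/eqP; rewrite -subr_eq0 -/N N0.
  apply/matrixP => a b; rewrite [RHS]mxE.
  apply: (indep (fun ab => N ab.1 ab.2) _ (a, b)) => e.
  rewrite selfadjoint_eqn_sum (_ : \matrix_(a, b) _ = N) ?N_eqn //.
  by apply/matrixP => a' b'; rewrite mxE.
pose N := \matrix_(a, b) v (a, b).
have N_sa : rho_selfadjoint c N.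
  apply/rho_selfadjoint_eqn => i j k.
  by rewrite -(v_eqn (Some (i, j, k))) selfadjoint_eqn_sum.
have [a Na] := sc N N_sa.
have a0 : a = 0.
  by have := v_eqn None; rewrite selfadjoint_eqn_sum /= -/N Na mxE eqxx mulr1n.
by move=> [i j]; have /matrixP/(_ i j) := Na; rewrite a0 !mxE mul0rn.
Qed.

End SelfadjointSystem.

Lemma polyfun_selfadjoint_system p q (i0 : 'I_q) ab e :
  polyfun (fun c : Vcoef p q => selfadjoint_system i0 c ab e).
Proof.
case: e => [[[i j] k]|]; last exact: pf_const.
pose M : 'M[RR]_q := delta_mx ab.1 ab.2.
apply: (polyfun_ext (f := fun c => rho_wedge c (row i M) (delta_mx 0 j) 0 k
  + - rho_wedge c (delta_mx 0 i) (row j M) 0 k)).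
  by move=> c; rewrite /selfadjoint_system /= /selfadjoint_defect !mxE.
by apply: pf_add; [|apply: polyfun_opp]; exact: polyfun_rho_wedge.
Qed.

Lemma polyfun_selfadjoint_minor p q (i0 : 'I_q) g :
  polyfun (fun c : Vcoef p q => minor (selfadjoint_system i0 c) g).
Proof.
apply: polyfun_det => a b.
apply: (polyfun_ext (f := fun c => selfadjoint_system i0 c (enum_val a) (g b))).
  by move=> c; rewrite mxE.
exact: polyfun_selfadjoint_system.
Qed.

(* [rho (x, y) = x_0 S y - y_0 S x], where [S] maps [e_(k+1)] to [f_k] and [e_0] to 0. *)
Section Star.
Variables (p q : nat).

Definition star_shift (b : 'I_q.+1) : 'rV[RR]_p := \row_(k < p) (val b == k.+1)%:R.

Definition star_coef : Vcoef p q.+1 := fun a b =>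
  (a == ord0)%:R *: star_shift b - (b == ord0)%:R *: star_shift a.

Lemma star_coef_alt : NR_alternating star_coef.
Proof. by move=> a b; rewrite /star_coef opprB. Qed.

Lemma star_rho_deltar x j :
  rho_wedge star_coef x (delta_mx 0 j) =
  x 0 ord0 *: star_shift j - (j == ord0)%:R *: \sum_a x 0 a *: star_shift a.
Proof.
rewrite rho_wedge_deltar /star_coef; under eq_bigr do rewrite scalerBr !scalerA.
rewrite sumrB -scaler_suml sum_mul_delta scaler_sumr.
by under [in RHS]eq_bigr do rewrite scalerA mulrC.
Qed.

Hypothesis q_le_p : (q <= p)%nat.

Lemma star_shiftE b (k : 'I_q) :
  star_shift b 0 (widen_ord q_le_p k) = (b == lift ord0 k)%:R.
Proof. by rewrite mxE -val_eqE. Qed.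

Lemma star_shift_sumE (x : 'rV[RR]_q.+1) (k : 'I_q) :
  (\sum_a x 0 a *: star_shift a) 0 (widen_ord q_le_p k) = x 0 (lift ord0 k).
Proof.
rewrite summxE -[RHS](sum_mul_delta _ (lift ord0 k)).
by apply: eq_bigr => a _; rewrite mxE star_shiftE.
Qed.

Lemma star_rho_deltar_coord x j (k : 'I_q) :
  rho_wedge star_coef x (delta_mx 0 j) 0 (widen_ord q_le_p k) =
  x 0 ord0 * (j == lift ord0 k)%:R - (j == ord0)%:R * x 0 (lift ord0 k).
Proof.
by rewrite star_rho_deltar !mxE star_shift_sumE -val_eqE.
Qed.

Lemma star_selfadjoint_coord M : rho_selfadjoint star_coef M -> forall i j (k : 'I_q),
  M i ord0 * (j == lift ord0 k)%:R - (j == ord0)%:R * M i (lift ord0 k) =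
  (i == ord0)%:R * M j (lift ord0 k) - M j ord0 * (i == lift ord0 k)%:R.
Proof.
move=> M_sa i j k; have /rowP/(_ (widen_ord q_le_p k)) := M_sa i j.
rewrite (rho_wedge_anti star_coef_alt (row j M)) mxE !star_rho_deltar_coord !mxE.
by move=> ->; ring.
Qed.

Lemma star_selfadjoints_scalar : selfadjoints_scalar star_coef.
Proof.
move=> M M_sa; exists (M ord0 ord0).
pose N := M - (M ord0 ord0)%:M.
have N_sa : rho_selfadjoint star_coef N.
  by apply: selfadjointB => //; exact: scalar_selfadjoint.
have N00 : N ord0 ord0 = 0 by rewrite !mxE eqxx mulr1n subrr.
suff N0 : N = 0 by apply/eqP; rewrite -subr_eq0 -/N N0.
have E := star_selfadjoint_coord N_sa.
have neq0_lift (k : 'I_q) : (ord0 == lift ord0 k) = false by apply/negbTE/neq_lift.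
have lift_neq0 (k : 'I_q) : (lift ord0 k == ord0) = false by rewrite eq_sym neq0_lift.
apply/matrixP => a b; rewrite [RHS]mxE.
case: (unliftP ord0 a) => [a'|] ->; case: (unliftP ord0 b) => [b'|] ->.
- by have := E (lift ord0 a') ord0 b'; rewrite eqxx lift_neq0 neq0_lift N00 /=; lra.
- by have := E (lift ord0 a') (lift ord0 a') a'; rewrite eqxx lift_neq0 /=; lra.
- by have := E ord0 ord0 b'; rewrite eqxx neq0_lift N00 /=; lra.
- exact: N00.
Qed.

End Star.

Section GroupLaw.
Variables (p q : nat) (c : Vcoef p q).

Lemma gmul_cenr X w : gmul c X (0, w) = (X.1, X.2 + w).
Proof. by rewrite /gmul /= rho_wedge0r scaler0 !addr0. Qed.

Lemma gmul_hor x y :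
  gmul c (x, 0) (y, 0) = (x + y, 2^-1 *: rho_wedge c x y).
Proof. by rewrite /gmul /= addr0 add0r. Qed.

Lemma cen_in_center w : in_center c (0, w).
Proof.
by move=> [y v]; rewrite /gmul /= rho_wedge0l rho_wedge0r add0r addr0 [w + v]addrC.
Qed.

Lemma shear_central_aut (s : 'rV[RR]_q -> 'rV[RR]_p) : {morph s : x y / x + y} ->
  NR_central_aut c (fun X => (X.1, X.2 + s X.1)).
Proof.
move=> sD; split; last by move=> [x z]; rewrite /gmul /= addNr; apply: cen_in_center.
split; first by exists (fun X => (X.1, X.2 - s X.1)) => -[x z]; rewrite /= ?addrK ?subrK.
by move=> [x z] [y w]; rewrite /gmul /= sD; congr pair; apply/rowP => k; rewrite !mxE; lra.
Qed.

Lemma lie_aut_of_linear (A : 'rV[RR]_q -> 'rV[RR]_q) (B : 'rV[RR]_p -> 'rV[RR]_p) :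
  (forall a x y, A (a *: x + y) = a *: A x + A y) ->
  (forall a z w, B (a *: z + w) = a *: B z + B w) ->
  bijective A -> bijective B ->
  (forall x y, B (rho_wedge c x y) = rho_wedge c (A x) (A y)) ->
  NR_lie_group_aut c (fun X => (A X.1, B X.2)).
Proof.
move=> A_lin B_lin [Ai AK AiK] [Bi BK BiK] B_rho.
have [MA AM] := mx_of_linear A_lin; have [MB BM] := mx_of_linear B_lin.
split; [split|].
- by exists (fun X => (Ai X.1, Bi X.2)) => -[x z]; rewrite /= ?AK ?BK ?AiK ?BiK.
- move=> [x z] [y w]; rewrite /gmul /= -B_rho; congr pair; first by rewrite !AM mulmxDl.
  by rewrite !BM !mulmxDl scalemxAl.
- have -> : (fun X : Nsp p q => (A X.1, B X.2)) = (fun X => (X.1 *m MA, X.2 *m MB)).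
    by apply: funext => -[x z]; rewrite /= AM BM.
  exact: pair_map_continuous (mulmx_continuous (M := MA)) (mulmx_continuous (M := MB)).
Qed.

End GroupLaw.

Section Automorphism.
Variables (p q : nat) (c : Vcoef p q).
Hypotheses (c_alt : NR_alternating c) (c_nondeg : rho_nondegenerate c).

Lemma in_centerP X : in_center c X <-> X.1 = 0.
Proof.
case: X => x z; split=> /= [xz_cen | ->]; last exact: cen_in_center.
apply: c_nondeg => y; case: (xz_cen (y, 0)) => _.
rewrite addr0 add0r (rho_wedge_anti c_alt y) => /addrI /rowP xy_anti.
by apply/rowP => k; move: (xy_anti k); rewrite !mxE; lra.
Qed.

Variables (F Finv : Nsp p q -> Nsp p q).
Hypotheses (F_K : cancel F Finv) (Finv_K : cancel Finv F).
Hypothesis F_mul : forall X Y, F (gmul c X Y) = gmul c (F X) (F Y).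

Lemma aut_center X : in_center c (F X) <-> in_center c X.
Proof.
split=> X_cen Y; last by rewrite -[Y]Finv_K -!F_mul X_cen.
by apply: (can_inj F_K); rewrite !F_mul X_cen.
Qed.

Lemma aut0 : F 0 = 0.
Proof.
have := F_mul 0 0; rewrite (_ : gmul c 0 0 = 0); last first.
  by rewrite /gmul /= rho_wedge0l scaler0 !addr0.
case: (F 0) => a b [a_aa]; have a0 : a = 0 by apply: (addrI a); rewrite addr0 -a_aa.
rewrite a0 rho_wedge0l scaler0 addr0 => b_bb.
by congr pair; apply: (addrI b); rewrite addr0 -b_bb.
Qed.

Definition aut_quo x := (F (x, 0)).1.
Definition aut_cen z := (F (0, z)).2.
Definition aut_shear x := (F (x, 0)).2.

Lemma aut_cenE z : F (0, z) = (0, aut_cen z).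
Proof.
have /in_centerP Fz_cen : in_center c (F (0, z)) by apply/aut_center/in_centerP.
by rewrite [LHS]surjective_pairing Fz_cen.
Qed.

Lemma autE x z : F (x, z) = (aut_quo x, aut_shear x + aut_cen z).
Proof.
have -> : (x, z) = gmul c (x, 0) (0, z) by rewrite gmul_cenr add0r.
by rewrite F_mul aut_cenE gmul_cenr.
Qed.

Lemma aut_cenD z w : aut_cen (z + w) = aut_cen z + aut_cen w.
Proof. by have := F_mul (0, z) (0, w); rewrite gmul_cenr !aut_cenE gmul_cenr => -[]. Qed.

Lemma aut_cen_is_zmod_morphism : zmod_morphism aut_cen.
Proof. by move=> z w; rewrite -[in RHS](subrK w z) [in RHS]aut_cenD addrK. Qed.

HB.instance Definition _ :=
  GRing.isZmodMorphism.Build _ _ aut_cen aut_cen_is_zmod_morphism.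

Lemma aut_gmul_hor x y :
  (aut_quo (x + y), aut_shear (x + y) + aut_cen (2^-1 *: rho_wedge c x y)) =
  (aut_quo x + aut_quo y,
   aut_shear x + aut_shear y + 2^-1 *: rho_wedge c (aut_quo x) (aut_quo y)).
Proof. by rewrite -autE -gmul_hor F_mul !autE raddf0 !addr0. Qed.

Lemma aut_quoD x y : aut_quo (x + y) = aut_quo x + aut_quo y.
Proof. by case: (aut_gmul_hor x y). Qed.

Lemma aut_quo_is_zmod_morphism : zmod_morphism aut_quo.
Proof. by move=> x y; rewrite -[in RHS](subrK y x) [in RHS]aut_quoD addrK. Qed.

HB.instance Definition _ :=
  GRing.isZmodMorphism.Build _ _ aut_quo aut_quo_is_zmod_morphism.

Lemma aut_cen_rho x y :
  aut_cen (rho_wedge c x y) = rho_wedge c (aut_quo x) (aut_quo y).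
Proof.
have [_ /rowP xy] := aut_gmul_hor x y; have [_ /rowP yx] := aut_gmul_hor y x.
rewrite [y + x]addrC [aut_shear y + _]addrC (rho_wedge_anti c_alt x) in yx.
rewrite (rho_wedge_anti c_alt (aut_quo x)) in yx.
have -> : rho_wedge c x y = 2^-1 *: rho_wedge c x y + 2^-1 *: rho_wedge c x y.
  by apply/rowP => k; rewrite !mxE; lra.
rewrite raddfD.
apply/rowP => k; move: (xy k) (yx k).
by rewrite scalerN raddfN !mxE; lra.
Qed.

Definition aut_quo_inv y := (Finv (y, 0)).1.
Definition aut_cen_inv w := (Finv (0, w)).2.

Lemma aut_quo_invK : cancel aut_quo_inv aut_quo.
Proof. by move=> y; have := Finv_K (y, 0); rewrite [Finv _]surjective_pairing autE => -[]. Qed.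

Lemma aut_quo_inj : injective aut_quo.
Proof.
apply: raddf_inj => x Ax0.
have : in_center c (F (x, 0)) by apply/in_centerP; rewrite autE.
by move/aut_center/in_centerP.
Qed.

Lemma aut_quoK : cancel aut_quo aut_quo_inv.
Proof. by move=> x; apply: aut_quo_inj; rewrite aut_quo_invK. Qed.

Lemma aut_cen_invK : cancel aut_cen_inv aut_cen.
Proof.
move=> w; have /in_centerP w_cen : in_center c (Finv (0, w)).
  by apply/aut_center; rewrite Finv_K; apply/in_centerP.
by have := Finv_K (0, w); rewrite [Finv _]surjective_pairing w_cen aut_cenE => -[].
Qed.

Lemma aut_cen_inj : injective aut_cen.
Proof.
apply: raddf_inj => z Bz0; have : F (0, z) = F 0 by rewrite aut0 aut_cenE Bz0.
by move/(can_inj F_K) => -[].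
Qed.

Lemma aut_cenK : cancel aut_cen aut_cen_inv.
Proof. by move=> z; apply: aut_cen_inj; rewrite aut_cen_invK. Qed.

Hypothesis c_scalar : selfadjoints_scalar c.

Lemma aut_quoZ (t : RR) x : aut_quo (t *: x) = t *: aut_quo x.
Proof.
have /choice [phi Aphi] : forall s : RR, exists r : RR,
    forall y, aut_quo (s *: aut_quo_inv y) = r *: y.
  move=> s; apply: (selfadjoint_map_scalar c_scalar c_nondeg) => y1 y2.
  rewrite -{1}[y2]aut_quo_invK -aut_cen_rho rho_wedgeZl -rho_wedgeZr.
  by rewrite aut_cen_rho aut_quo_invK.
have AZ s y : aut_quo (s *: y) = phi s *: aut_quo y by rewrite -Aphi aut_quoK.
have [Ax0 | Ax_neq0] := eqVneq (aut_quo x) 0; first by rewrite AZ Ax0 !scaler0.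
have scale_inj : injective (fun s : RR => s *: aut_quo x).
  move=> s r /eqP; rewrite -subr_eq0 -scalerBl scaler_eq0 (negbTE Ax_neq0) orbF.
  by rewrite subr_eq0 => /eqP.
suff phi_id : forall s, phi s = s by rewrite AZ phi_id.
apply: real_rmorph_id => [s r | s r |]; apply: scale_inj => /=.
- by rewrite -AZ scalerDl aut_quoD !AZ scalerDl.
- by rewrite -AZ -scalerA !AZ scalerA.
- by rewrite -AZ !scale1r.
Qed.

Lemma aut_cen_rhoZ (t : RR) x y :
  aut_cen (t *: rho_wedge c x y) = t *: aut_cen (rho_wedge c x y).
Proof. by rewrite -rho_wedgeZl !aut_cen_rho aut_quoZ rho_wedgeZl. Qed.

Hypothesis c_surj : NR_surjective_rho c.

Lemma aut_cenZ (t : RR) z : aut_cen (t *: z) = t *: aut_cen z.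
Proof.
have [a ->] := c_surj z; rewrite scaler_sumr !raddf_sum /=.
apply: eq_bigr => i _; rewrite scaler_sumr !raddf_sum /=.
by apply: eq_bigr => j _; rewrite -rho_wedge_delta scalerA !aut_cen_rhoZ scalerA.
Qed.

Lemma aut_shearD x y : aut_shear (x + y) = aut_shear x + aut_shear y.
Proof.
have [_] := aut_gmul_hor x y.
by rewrite aut_cenZ aut_cen_rho => /addIr.
Qed.

Lemma aut_quo_invD y1 y2 : aut_quo_inv (y1 + y2) = aut_quo_inv y1 + aut_quo_inv y2.
Proof. by apply: aut_quo_inj; rewrite aut_quoD !aut_quo_invK. Qed.

Lemma aut_decomposition :
  exists mu Fb, [/\ NR_central_aut c mu, NR_lie_group_aut c Fb & F = mu \o Fb].
Proof.
exists (fun X => (X.1, X.2 + aut_shear (aut_quo_inv X.1))).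
exists (fun X => (aut_quo X.1, aut_cen X.2)); split.
- apply: (@shear_central_aut _ _ c (aut_shear \o aut_quo_inv)) => y1 y2 /=.
  by rewrite aut_quo_invD aut_shearD.
- apply: (lie_aut_of_linear (A := aut_quo) (B := aut_cen)); last exact: aut_cen_rho.
  + by move=> a x y; rewrite aut_quoD aut_quoZ.
  + by move=> a z w; rewrite aut_cenD aut_cenZ.
  + exact: Bijective aut_quoK aut_quo_invK.
  + exact: Bijective aut_cenK aut_cen_invK.
- by apply: funext => -[x z]; rewrite autE /= aut_quoK addrC.
Qed.

End Automorphism.

Lemma group_aut_decomposition p q (c : Vcoef p q) F :
  NR_alternating c -> rho_nondegenerate c -> selfadjoints_scalar c ->
  NR_surjective_rho c -> NR_group_aut c F ->
  exists mu Fb, [/\ NR_central_aut c mu, NR_lie_group_aut c Fb & F = mu \o Fb].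
Proof.
move=> c_alt c_nondeg c_scalar c_surj [[Finv F_K Finv_K] F_mul].
exact: aut_decomposition.
Qed.

Local Close Scope ring_scope.

Lemma id_field_aut p q (c : Vcoef p q) : NR_field_aut c idfun.
Proof.
exists 1%N, (fun _ _ => True), (fun _ => idfun); split => //.
- move=> X; exists (fun _ => X); split; first by rewrite big_ord1.
  by move=> Xs [_ ->]; apply: funext => i; rewrite big_ord1 (ord1 i).
- by move=> i; left.
Qed.

Theorem theorem3p3 (p q : nat) :
  (1 <= p) -> (2 <= q) -> (q.-1 <= p) -> (p.*2 <= q * q.-1) ->
  exists O : Vcoef p q -> Prop,
    [/\ NR_zariski_open O, NR_zariski_dense O &
        forall c : Vcoef p q, NR_alternating c -> O c -> NR_surjective_rho c ->
          NR_partial_automatic_continuity c /\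
          (forall F, NR_group_aut c F ->
             exists mu Fb, [/\ NR_central_aut c mu, NR_lie_group_aut c Fb &
                               F = mu \o Fb])].
Proof.
(* [1 <= p] follows from the other bounds, and [2 p <= q (q - 1)] only ensures
   that surjective [rho] exist. *)
move=> _; case: q => [//|q] q_gt1 /= q_le_p _.
pose d g (c : Vcoef p q.+1) := minor (selfadjoint_system ord0 c) g.
exists (fun c => exists g, d g c != 0%R); split.
- exact: zariski_open_nonvanishing (polyfun_selfadjoint_minor ord0).
- have /rows_independentP[g0 dg0] :=
    (selfadjoint_system_indep ord0 (@star_coef p q)).2 (star_selfadjoints_scalar q_le_p).
  apply: (zariski_dense_nonvanishing (polyfun_selfadjoint_minor ord0 g0) (@star_coef_alt p q)).
    exact: dg0.
  by move=> c _ dc; exists g0.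
- move=> c c_alt /rows_independentP/selfadjoint_system_indep c_scalar c_surj.
  have c_nondeg := nondegenerate_selfadjoints_scalar q_gt1 c_alt c_scalar.
  have decomp := group_aut_decomposition c_alt c_nondeg c_scalar c_surj.
  split=> // F /decomp[mu [Fb [mu_cen Fb_lie ->]]].
  by exists mu, Fb, idfun; split=> //; exact: id_field_aut.
Qed.
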